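(* Let $p > 0$, let $X$ be a random variable on a probability space with $X \ge 0$ almost surely and $X \in L^p$ (i.e. $E X^p < \infty$), and let $0 < r < s \le p/2$. Then $$\operatorname{Var}(X^r)^{1/r} \le \operatorname{Var}(X^s)^{1/s}.$$
   Context: $\operatorname{Var}(Y) = E(Y^2) - (EY)^2$ denotes the variance of a square-integrable random variable $Y$. Statements such as $X\ge 0$ are meant almost surely. *)

From mathcomp Require Import all_boot all_order all_algebra.
From mathcomp Require Export all_classical all_reals all_analysis.

From mathcomp Require Import all_boot all_order all_algebra.
From mathcomp Require Import all_classical all_reals all_analysis.
From mathcomp Require Import measurable_realfun.
Import Order.TTheory GRing.Theory Num.Theory.
Local Open Scope ring_scope.

(* Put Y = X `^ s and t = r / s, so that X `^ r = Y `^ t, 0 < t < 1, and Y is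
   square integrable because 2 s <= p.  For Y >= 0 with mean a,
     Var (Y^t) <= E (Y^t - a^t)^2    (the mean minimises the quadratic deviation)
               <= E ((Y - a)^2)^t    (y |-> y^t is subadditive on [0, +oo))
               <= (E (Y - a)^2)^t    (Jensen, y |-> y^t is concave)
                = Var (Y)^t,
   and taking r-th roots gives Var (X^r)^(1/r) <= Var (Y)^(t/r) = Var (X^s)^(1/s). *)

Section powR_inequalities.
Context {R : realType}.
Implicit Types a b x t u v : R.

Lemma powR_subadditive a b t : 0 <= a -> 0 <= b -> 0 < t <= 1 ->
  (a + b) `^ t <= a `^ t + b `^ t.
Proof.
move=> a0 b0 /andP[t0 t1].
have [->|c_neq0] := eqVneq (a + b) 0.
  by rewrite powR0 ?gt_eqF// addr_ge0// powR_ge0.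
set c := a + b; have c0 : 0 < c by rewrite lt_neqAle eq_sym c_neq0 addr_ge0.
(* Normalise by c: on [0, 1] the map z |-> z `^ t lies above the identity. *)
have frac_le z : 0 <= z <= c -> z / c <= (z / c) `^ t.
  move=> /andP[z0 zc]; have [->|z_neq0] := eqVneq z 0.
    by rewrite mul0r powR0 ?gt_eqF.
  apply: ger1_powR t1; rewrite divr_gt0 ?ler_pdivrMr// ?mul1r//.
  by rewrite lt_neqAle eq_sym z_neq0.
have scale z : 0 <= z -> z `^ t = c `^ t * (z / c) `^ t.
  by move=> z0; rewrite -powRM ?divr_ge0 ?(ltW c0)// mulrCA divff ?gt_eqF// mulr1.
rewrite (scale a) // (scale b) // -mulrDr -[leLHS]mulr1.
apply: ler_wpM2l; first exact: powR_ge0.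
have -> : 1 = a / c + b / c by rewrite -mulrDl divff ?gt_eqF.
by apply: lerD; apply: frac_le; rewrite ?a0 ?b0 /c ?lerDl ?lerDr.
Qed.

Lemma dist_powR_le x a t : 0 <= x -> 0 <= a -> 0 < t <= 1 ->
  `|x `^ t - a `^ t| <= `|x - a| `^ t.
Proof.
move=> x0 a0 t01.
wlog ax : x a x0 a0 / a <= x.
  move=> H; have [|xa] := leP a x; first exact: H.
  by rewrite distrC (distrC x); apply: H => //; exact: ltW.
have t0 : 0 <= t by case/andP: t01 => /ltW.
rewrite !ger0_norm ?subr_ge0 ?ge0_ler_powR// lerBlDl.
have xa0 : 0 <= x - a by rewrite subr_ge0.
by have := powR_subadditive (x - a) a t xa0 a0 t01; rewrite subrK addrC.
Qed.

Lemma sqr_dist_powR_le x a t : 0 <= x -> 0 <= a -> 0 < t <= 1 ->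
  (x `^ t - a `^ t) ^+ 2 <= ((x - a) ^+ 2) `^ t.
Proof.
move=> x0 a0 t01.
rewrite -[(x - a) ^+ 2]real_normK ?num_real// -[`|x - a| ^+ 2]powR_mulrn//.
rewrite -powRrM mulrC powRrM powR_mulrn ?powR_ge0// -real_normK ?num_real//.
by rewrite lerXn2r ?nnegrE ?powR_ge0// dist_powR_le.
Qed.

Lemma powR_le_1_add_norm x u v : 0 <= u <= v -> x `^ u <= 1 + `|x| `^ v.
Proof.
move=> /andP[u0 uv].
have [x_lt0|x0] := ltP x 0; first by rewrite lt0_powR1// lerDl powR_ge0.
have [x1|x_gt1] := leP x 1.
  have : x `^ u <= 1 `^ u by rewrite ge0_ler_powR ?nnegrE.
  by rewrite powR1 => /le_trans; apply; rewrite lerDl powR_ge0.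
by rewrite ger0_norm// ler_wpDl// ler_powR// ltW.
Qed.

End powR_inequalities.

Section variance_of_powers.
Context {d : measure_display} {T : measurableType d} {R : realType}
  {P : probability T R}.
Local Open Scope ereal_scope.

Lemma Lfun2_of_sqr_le_powR (X f : T -> R) (p : R) : (0 < p)%R ->
  X \in Lfun P p%:E -> measurable_fun setT f ->
  (forall x, f x ^+ 2 <= 1 + `|X x| `^ p)%R -> f \in Lfun P 2%:E.
Proof.
move=> p0; rewrite inE => /andP[mX XL] mf f_le; rewrite inE/= in mX.
have iX : \int[P]_x (`|X x| `^ p)%:E < +oo.
  move: XL; rewrite inE/= /finite_norm unlock /Lnorm => /lty_poweRy.
  by rewrite invr_neq0 ?gt_eqF//; apply.
rewrite inE; apply/andP; split; rewrite inE//= /finite_norm unlock /Lnorm poweR_lty//.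
under eq_integral => x _ do rewrite (_ : `|(EFin \o f) x| `^ 2 = (`|f x| `^ 2)%:E)//.
have mXp : measurable_fun setT (fun x => `|X x| `^ p)%R.
  by apply: (measurableT_comp (measurable_powR _)); exact: measurableT_comp.
apply: (@le_lt_trans _ _ (\int[P]_x ((1 + `|X x| `^ p)%R)%:E)).
  apply: ge0_le_integral => //.
  - apply: measurableT_comp => //.
    by apply: (measurableT_comp (measurable_powR _)); exact: measurableT_comp.
  - by apply: measurableT_comp => //; exact: measurable_funD.
  - by move=> x _; rewrite /= lee_fin powR_mulrn// real_normK ?num_real.
under eq_integral => x _ do rewrite EFinD.
rewrite ge0_integralD//; last exact: measurableT_comp.
by rewrite integral_cst// mul1e lte_add_pinfty// ltey_eq fin_num_measure.
Qed.

(* Jensen's inequality for the concave map w |-> w `^ t, obtained from Hoelder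
   with exponents 1/t and 1/(1-t) applied to W `^ t and the constant 1. *)
Lemma expectation_powR_le (W : T -> R) (t : R) : measurable_fun setT W ->
  (forall x, 0 <= W x)%R -> (0 < t < 1)%R ->
  'E_P[fun x => W x `^ t]%R <= 'E_P[W] `^ t.
Proof.
move=> mW W0 /andP[t0 t1].
have mWt : measurable_fun setT (fun x => W x `^ t)%R.
  exact: (measurableT_comp (measurable_powR _)).
have := @hoelder _ _ _ P (fun x => W x `^ t)%R (cst 1)%R t^-1 (1 - t)^-1 mWt
  (measurable_cst _).
rewrite invr_gt0 t0 invr_gt0 subr_gt0 t1 !invrK subrKC => /(_ isT isT erefl).
rewrite Lnorm1.
have -> : \int[P]_x `|(EFin \o ((fun x => W x `^ t) \* cst 1)%R) x| =
    'E_P[fun x => W x `^ t]%R.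
  rewrite expectation.unlock; apply: eq_integral => x _.
  by rewrite /= mulr1 ?abse_EFin ger0_norm// powR_ge0.
have -> : 'N[P]_(t^-1)%:E[EFin \o (fun x => W x `^ t)%R] = 'E_P[W] `^ t.
  rewrite Lnorm.unlock /Lnorm invrK expectation.unlock; congr (_ `^ _).
  apply: eq_integral => x _.
  by rewrite /= ?abse_EFin ?poweR_EFin ger0_norm ?powR_ge0// -powRrM mulfV ?gt_eqF// powRr1.
have -> : 'N[P]_((1 - t)^-1)%:E[EFin \o cst 1%R] = 1.
  rewrite Lnorm.unlock /Lnorm.
  under eq_integral => x _ do rewrite /= ?abse_EFin ?poweR_EFin normr1 powR1.
  by rewrite integral_cst//= mul1e probability_setT poweR1r.
by rewrite mule1.
Qed.

Lemma variance_le_expectation_sqrB (Z : T -> R) (b : R) : Z \in Lfun P 2%:E ->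
  'V_P[Z] <= 'E_P[fun x => (Z x - b) ^+ 2]%R.
Proof.
move=> Z2; rewrite -(varianceB_cst_r b Z2) varianceE; last first.
  rewrite rpredB//; first by rewrite lee1n.
  by move=> ?; exact: Lfun_cst.
by rewrite geeDl// oppe_le0 sqre_ge0.
Qed.

Lemma variance_powR_le (Y : T -> R) (t : R) : (forall x, 0 <= Y x)%R ->
  Y \in Lfun P 2%:E -> (0 < t < 1)%R ->
  'V_P[fun x => Y x `^ t]%R <= 'V_P[Y] `^ t.
Proof.
move=> Y0 Y2 t01; have /andP[t0 t1] := t01.
have mY : measurable_fun setT Y by have := sub_Lfun_mfun Y2; rewrite inE.
have mYt : measurable_fun setT (fun x => Y x `^ t)%R.
  exact: (measurableT_comp (measurable_powR _)).
have Yt2 : (fun x => Y x `^ t)%R \in Lfun P 2%:E.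
  apply: (Lfun2_of_sqr_le_powR _ _ _ _ Y2) => // x.
  rewrite -powR_mulrn ?powR_ge0// -powRrM powR_le_1_add_norm//.
  by rewrite mulr_ge0 ?(ltW t0)//=; apply: ler_piMl; rewrite ?(ltW t1).
set a := fine 'E_P[Y].
have a0 : (0 <= a)%R by apply/fine_ge0/expectation_ge0.
have mYa : measurable_fun setT (fun x => (Y x - a) ^+ 2)%R.
  by apply: measurable_funX; exact: measurable_funB.
apply: le_trans (variance_le_expectation_sqrB _ (a `^ t) Yt2) _.
apply: (@le_trans _ _ 'E_P[fun x => ((Y x - a) ^+ 2) `^ t]%R).
  apply: expectation_le => [||x|x|]; rewrite ?sqr_ge0 ?powR_ge0//.
  - by apply: measurable_funX; exact: measurable_funB.
  - exact: (measurableT_comp (measurable_powR _)).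
  - by apply: aeW => x; apply: sqr_dist_powR_le; rewrite ?t0 ?(ltW t1).
have -> : 'V_P[Y] = 'E_P[fun x => (Y x - a) ^+ 2]%R.
  by rewrite /variance covariance.unlock.
by apply: expectation_powR_le => // x; exact: sqr_ge0.
Qed.

End variance_of_powers.

Theorem corollary2p3 (d : measure_display) (T : measurableType d) (R : realType)
  (P : probability T R) (X : T -> R) (p r s : R) :
  0 < p ->
  {ae P, forall w, 0 <= X w} ->
  X \in Lfun P p%:E ->
  0 < r -> r < s -> s <= p / 2 ->
  (('V_P[fun w => (X w `^ r)%R]) `^ r^-1 <= ('V_P[fun w => (X w `^ s)%R]) `^ s^-1)%E.
Proof.
move=> p0 _ Xp r0 rs sp; have s0 : 0 < s := lt_trans r0 rs.
have mX : measurable_fun setT X by have := sub_Lfun_mfun Xp; rewrite inE.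
set Y := fun w => X w `^ s.
have Y2 : Y \in Lfun P 2%:E.
  apply: (Lfun2_of_sqr_le_powR _ _ _ p0 Xp) => [|w].
    exact: (measurableT_comp (measurable_powR _)).
  rewrite -powR_mulrn ?powR_ge0// -powRrM powR_le_1_add_norm//.
  by rewrite mulr_ge0 ?(ltW s0)//= -ler_pdivlMr.
have -> : (fun w => X w `^ r) = fun w => Y w `^ (r / s).
  by apply/funext => w; rewrite /Y -powRrM mulrCA divff ?gt_eqF// mulr1.
have t01 : 0 < r / s < 1 by rewrite divr_gt0//= ltr_pdivrMr// mul1r.
have -> : ('V_P[Y] `^ s^-1 = ('V_P[Y] `^ (r / s)) `^ r^-1)%E.
  by rewrite -poweRrM mulrAC divff ?gt_eqF// mul1r.
rewrite gt0_ler_poweR ?invr_ge0 ?(ltW r0)// ?in_itv/= ?variance_ge0 ?poweR_ge0 ?leey//.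
by apply: variance_powR_le => // w; exact: powR_ge0.
Qed.
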